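(* For a non-negative integer $n$ and real $x>0$ small, define $$A_n(x)=2\ln(n!\,x)+\ln|\Gamma(-n-x)|+\ln|\Gamma(-n+x)|-x^2\sum_{k=1}^n\frac1{k^2}.$$ Then for every non-negative integer $n$, $$\lim_{x\to0^+}\frac{1}{x^2}\left[1-\frac{A_n(x)}{A_{n+1}(x)}\right]=\frac{3}{(n+1)^4\pi^2}=\frac{1}{2(n+1)^4\zeta(2)}.$$
   Context: $\Gamma$ is Euler's Gamma function on the real line and $\zeta$ is the Riemann zeta function. *)

From Stdlib Require Import Reals Lra Arith Factorial.
From Coquelicot Require Import Coquelicot.
Open Scope R_scope.

Definition Gamma_int (x : R) : R :=
  RInt_gen (fun t => Rpower t (x - 1) * exp (- t)) (at_right 0) (Rbar_locally p_infty).

Fixpoint rising (x : R) (m : nat) : R :=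
  match m with O => 1 | S m' => rising x m' * (x + INR m') end.

(* Euler's Gamma function on the real line: the integral for x > 0, and the
   usual continuation via Γ(x) = Γ(x+m) / (x(x+1)...(x+m-1)) for x <= 0,
   with m = up(-x) so that x + m > 0 (value irrelevant at the poles). *)
Definition Gamma (x : R) : R :=
  if Rlt_dec 0 x then Gamma_int x
  else let m := Z.to_nat (up (- x)) in
       Gamma_int (x + INR m) / rising x m.

Definition zeta (s : R) : R := Series (fun k => / Rpower (INR k + 1) s).

Definition A (n : nat) (x : R) : R :=
  2 * ln (INR (Factorial.fact n) * x) + ln (Rabs (Gamma (- INR n - x)))
  + ln (Rabs (Gamma (- INR n + x)))
  - x ^ 2 * sum_n_m (fun k => / (INR k) ^ 2) 1 n.

(* Let V(x) = x Γ(x) Γ(1 - x).  Gauss's limit formula for Γ, obtained from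
   Euler's integral through [∫_0^n t^z (1 - t/n)^n dt], turns V(x) into the
   limit of 1 / Π_(k<=N) (1 - x²/k²); with Σ 1/k² = π²/6 (Matsuoka's proof)
   this gives x² ζ(2) <= ln V(x) <= x² ζ(2) / (1 - x²), without ever using
   the reflection formula.  The functional equation reduces Γ(-n ± x) to
   Γ(x) and Γ(1 - x), so that A_n(x) = ln V(x) + c_n(x) with
   c_n(x) = Σ_(k<=n) (-ln(1 - x²/k²) - x²/k²) = O(x⁴).  Hence
   A_(n+1)(x) ~ ζ(2) x², while A_(n+1)(x) - A_n(x) = -ln(1 - u) - u
   = u²/2 + O(u³) with u = x²/(n+1)², and the ratio tends to
   1 / (2 (n+1)⁴ ζ(2)). *)

From Stdlib Require Import Reals Lra Lia ZArith Nsatz.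
From Coquelicot Require Import Coquelicot.
Open Scope R_scope.

Lemma ex_derive_continuous_R (f : R -> R) x : ex_derive f x -> continuous f x.
Proof. exact (ex_derive_continuous (K := R_AbsRing) (V := R_NormedModule) f x). Qed.

Lemma continuous_mult_R (f g : R -> R) x :
  continuous f x -> continuous g x -> continuous (fun t => f t * g t) x.
Proof. exact (continuous_mult (K := R_AbsRing) f g x). Qed.

Lemma continuous_plus_R (f g : R -> R) x :
  continuous f x -> continuous g x -> continuous (fun t => f t + g t) x.
Proof. exact (continuous_plus (V := R_NormedModule) f g x). Qed.

Lemma is_derive_const_R (c x : R) : is_derive (fun _ => c) x 0.
Proof. exact (is_derive_const (K := R_AbsRing) (V := R_NormedModule) c x). Qed.

Lemma is_derive_mult_R (f g : R -> R) x df dg :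
  is_derive f x df -> is_derive g x dg ->
  is_derive (fun t => f t * g t) x (df * g x + f x * dg).
Proof. intros Hf Hg. apply (is_derive_mult (K := R_AbsRing)); auto. intros; apply Rmult_comm. Qed.

Lemma ex_RInt_continuous_R (f : R -> R) a b :
  (forall z, Rmin a b <= z <= Rmax a b -> continuous f z) -> ex_RInt f a b.
Proof. exact (ex_RInt_continuous (V := R_CompleteNormedModule) f a b). Qed.

Lemma RInt_correct_R (f : R -> R) a b : ex_RInt f a b -> is_RInt f a b (RInt f a b).
Proof. exact (RInt_correct (V := R_CompleteNormedModule) f a b). Qed.

Lemma is_RInt_derive_R (F f g : R -> R) a b v :
  (forall x, Rmin a b <= x <= Rmax a b -> is_derive F x (f x)) ->
  (forall x, Rmin a b <= x <= Rmax a b -> continuous f x) ->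
  (forall x, Rmin a b < x < Rmax a b -> f x = g x) ->
  F b - F a = v -> is_RInt g a b v.
Proof.
intros HF Hf Hfg <-. apply is_RInt_ext with f; auto.
exact (is_RInt_derive (V := R_CompleteNormedModule) F f a b HF Hf).
Qed.

Lemma ln_le_sub_1 y : 0 < y -> ln y <= y - 1.
Proof.
intros Hy. rewrite <- (exp_ln y Hy) at 2. generalize (exp_ineq1_le (ln y)); lra.
Qed.

Lemma exp_pow x n : exp x ^ n = exp (INR n * x).
Proof.
induction n as [|n IH]; simpl pow.
- now rewrite Rmult_0_l, exp_0.
- rewrite IH, S_INR, <- exp_plus. f_equal; ring.
Qed.

Lemma Rpower_1_l z : Rpower 1 z = 1.
Proof. unfold Rpower. now rewrite ln_1, Rmult_0_r, exp_0. Qed.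

Lemma Rpower_near_0 z eps : 0 < z -> 0 < eps ->
  exists d, 0 < d /\ forall h, 0 < h < d -> Rpower h z < eps.
Proof.
intros Hz He. exists (exp (ln eps / z)). split; [apply exp_pos|].
intros h [Hh0 Hhd]. unfold Rpower. rewrite <- (exp_ln eps He). apply exp_increasing.
apply ln_increasing in Hhd; auto. rewrite ln_exp in Hhd.
replace (ln eps) with (z * (ln eps / z)) by (field; lra). apply Rmult_lt_compat_l; lra.
Qed.

(** * Euler's integral *)

(* [tpow z t] is [t ^ z] on [(0, +oo)], extended by [0]: for [z > 0] it is
   continuous on [R], so Euler's integrands become Riemann integrable at [0]. *)
Definition tpow (z t : R) : R := if Rlt_dec 0 t then Rpower t z else 0.

Lemma tpow_pos z t : 0 < t -> tpow z t = Rpower t z.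
Proof. intros; unfold tpow; destruct Rlt_dec; lra. Qed.

Lemma tpow_nonpos z t : t <= 0 -> tpow z t = 0.
Proof. intros; unfold tpow; destruct Rlt_dec; lra. Qed.

Lemma tpow_ge0 z t : 0 <= tpow z t.
Proof. unfold tpow; destruct Rlt_dec; [apply Rlt_le, exp_pos | lra]. Qed.

Lemma tpow_succ z t : tpow (z + 1) t = t * tpow z t.
Proof.
destruct (Rlt_dec 0 t).
- rewrite !tpow_pos, Rpower_plus, Rpower_1 by auto. ring.
- rewrite !tpow_nonpos; lra.
Qed.

Lemma tpow_scal z a t : 0 < a -> tpow z (a * t) = Rpower a z * tpow z t.
Proof.
intros Ha. destruct (Rlt_dec 0 t).
- rewrite !tpow_pos by (auto; nra). now rewrite Rpower_mult_distr.
- rewrite !tpow_nonpos by nra. ring.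
Qed.

Lemma tpow_le z t : 0 <= z <= 3 -> 0 <= t -> tpow z t <= 1 + t ^ 3.
Proof.
intros Hz Ht. assert (Ht3 := pow_le t 3 Ht).
destruct (Rlt_dec 0 t) as [Ht0|]; [|rewrite tpow_nonpos; lra].
rewrite tpow_pos by auto. destruct (Rle_dec t 1).
- rewrite <- (Rpower_1_l z). assert (Rpower t z <= Rpower 1 z) by (apply Rle_Rpower_l; lra). lra.
- assert (Hle : Rpower t z <= Rpower t (INR 3)) by (apply Rle_Rpower; simpl; lra).
  rewrite Rpower_pow in Hle by auto. lra.
Qed.

Lemma is_derive_tpow_neg z t : t < 0 -> is_derive (tpow z) t 0.
Proof.
intros Ht. apply is_derive_ext_loc with (fun _ => 0); [|apply is_derive_const_R].
apply locally_interval with m_infty 0; simpl; auto.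
intros y _ Hy. rewrite tpow_nonpos; simpl in Hy; lra.
Qed.

Lemma is_derive_tpow_pos z t : 0 < t -> is_derive (tpow z) t (z * Rpower t (z - 1)).
Proof.
intros Ht. apply is_derive_ext_loc with (fun y => Rpower y z).
- apply locally_interval with 0 p_infty; simpl; auto.
  intros y Hy _. rewrite tpow_pos; simpl in Hy; lra.
- apply is_derive_Reals, derivable_pt_lim_power; auto.
Qed.

Lemma continuous_tpow z t : 0 < z -> continuous (tpow z) t.
Proof.
intros Hz. destruct (Rtotal_order t 0) as [Ht|[->|Ht]].
- apply ex_derive_continuous_R. eexists. now apply is_derive_tpow_neg.
- apply continuity_pt_filterlim. intros eps He.
  destruct (Rpower_near_0 z eps Hz He) as [d [Hd Hsmall]].
  exists d. split; auto. intros y [_ Hy]. simpl in *. unfold R_dist in *.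
  rewrite (tpow_nonpos z 0), Rminus_0_r in * by lra. destruct (Rlt_dec 0 y).
  + rewrite tpow_pos, Rabs_right in * by (auto; apply Rle_ge, Rlt_le, exp_pos || lra).
    apply Hsmall; lra.
  + rewrite tpow_nonpos, Rabs_R0; lra.
- apply ex_derive_continuous_R. eexists. now apply is_derive_tpow_pos.
Qed.

Lemma is_derive_tpow_succ z t : 0 < z -> is_derive (tpow (z + 1)) t ((z + 1) * tpow z t).
Proof.
intros Hz. destruct (Rtotal_order t 0) as [Ht|[->|Ht]].
- rewrite tpow_nonpos, Rmult_0_r by lra. now apply is_derive_tpow_neg.
- rewrite tpow_nonpos, Rmult_0_r by lra. apply is_derive_Reals. intros eps He.
  destruct (Rpower_near_0 z eps Hz He) as [d [Hd Hsmall]].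
  exists (mkposreal d Hd). intros h Hh0 Hh. simpl in Hh.
  rewrite Rplus_0_l, (tpow_nonpos _ 0), tpow_succ by lra.
  replace ((h * tpow z h - 0) / h - 0) with (tpow z h) by (field; lra).
  destruct (Rlt_dec 0 h).
  + rewrite tpow_pos, Rabs_right in * by (auto; apply Rle_ge, Rlt_le, exp_pos || lra).
    apply Hsmall; lra.
  + rewrite tpow_nonpos, Rabs_R0; lra.
- rewrite tpow_pos by auto. replace (Rpower t z) with (Rpower t (z + 1 - 1)) by (f_equal; ring).
  now apply is_derive_tpow_pos.
Qed.

Definition euler (z t : R) : R := tpow z t * exp (- t).

Definition euler_int (z b : R) : R := RInt (euler z) 0 b.

Lemma continuous_euler z t : 0 < z -> continuous (euler z) t.
Proof.
intros Hz. apply continuous_mult_R; [now apply continuous_tpow|].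
apply ex_derive_continuous_R. auto_derive. auto.
Qed.

Lemma ex_RInt_euler z a b : 0 < z -> ex_RInt (euler z) a b.
Proof. intros Hz. apply ex_RInt_continuous_R. intros. now apply continuous_euler. Qed.

Lemma euler_ge0 z t : 0 <= euler z t.
Proof. apply Rmult_le_pos; [apply tpow_ge0 | apply Rlt_le, exp_pos]. Qed.

Lemma is_derive_euler_int z t : 0 < z -> is_derive (euler_int z) t (euler z t).
Proof.
intros Hz. apply (is_derive_RInt (euler z) (euler_int z) 0).
- apply filter_forall. intros. now apply RInt_correct_R, ex_RInt_euler.
- now apply continuous_euler.
Qed.

Lemma continuous_euler_int z t : 0 < z -> continuous (euler_int z) t.
Proof. intros Hz. apply ex_derive_continuous_R. eexists. now apply is_derive_euler_int. Qed.

(* [t ^ z <= 1 + t ^ 3 <= 1 + 216 e^(t/2)], from [t / 6 <= e^(t/6)]. *)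
Lemma euler_le z t : 0 < z <= 3 -> 0 <= t -> euler z t <= 217 * exp (- t / 2).
Proof.
intros Hz Ht. unfold euler. set (E := exp (- t / 2)).
assert (HE : 0 < E) by apply exp_pos.
assert (Einv : E * exp (t / 2) = 1) by (unfold E; rewrite <- exp_plus, <- exp_0; f_equal; field).
assert (Esq : exp (- t) = E * E) by (unfold E; rewrite <- exp_plus; f_equal; field).
assert (Hcube : t ^ 3 <= 216 * exp (t / 2)).
{ replace (exp (t / 2)) with (exp (t / 6) ^ 3) by (rewrite exp_pow; f_equal; simpl; field).
  replace (t ^ 3) with (216 * (t / 6) ^ 3) by field.
  apply Rmult_le_compat_l; [lra|]. apply pow_incr. generalize (exp_ineq1_le (t / 6)); lra. }
assert (Hhalf := exp_ineq1_le (t / 2)).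
assert (Hp := tpow_le z t ltac:(lra) Ht). assert (Hp0 := tpow_ge0 z t).
rewrite Esq. nra.
Qed.

Lemma is_lim_euler_infty z : 0 < z <= 3 -> is_lim (euler z) p_infty 0.
Proof.
intros Hz. apply is_lim_le_le_loc with (fun _ => 0) (fun t => 217 * exp (- t / 2)).
- exists 0. intros t Ht. split; [apply euler_ge0 | apply euler_le; lra].
- apply is_lim_const.
- replace (Finite 0) with (Rbar_mult 217 0) by (simpl; f_equal; ring).
  apply is_lim_scal_l, (is_lim_ext (fun t => exp (- / 2 * t + 0))); [intros; f_equal; field|].
  apply is_lim_comp_lin; [|lra].
  replace (Rbar_plus (Rbar_mult (- / 2) p_infty) 0) with m_infty; [apply is_lim_exp_m|].
  simpl. case Rle_dec; [intros; exfalso; lra | reflexivity].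
Qed.

Lemma euler_int_bounds z b : 0 < z <= 3 -> 0 <= b -> 0 <= euler_int z b <= 434.
Proof.
intros Hz Hb. unfold euler_int. split.
- apply RInt_ge_0; auto. apply ex_RInt_euler; lra. intros; apply euler_ge0.
- apply Rle_trans with (RInt (fun t => 217 * exp (- t / 2)) 0 b).
  + apply RInt_le; auto. apply ex_RInt_euler; lra.
    * apply ex_RInt_continuous_R. intros. apply ex_derive_continuous_R. auto_derive. auto.
    * intros. apply euler_le; lra.
  + rewrite (is_RInt_unique _ 0 b (434 - 434 * exp (- b / 2))).
    * generalize (exp_pos (- b / 2)); lra.
    * apply (is_RInt_derive_R (fun t => - 434 * exp (- t / 2)) (fun t => 217 * exp (- t / 2))); auto.
      -- intros. auto_derive; auto. unfold Rdiv. field.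
      -- intros. apply ex_derive_continuous_R. auto_derive. auto.
      -- replace (- 0 / 2) with 0 by field. rewrite exp_0. ring.
Qed.

Lemma euler_int_Chasles z a b : 0 < z -> euler_int z b = euler_int z a + RInt (euler z) a b.
Proof.
intros Hz. unfold euler_int.
rewrite <- (RInt_Chasles (euler z) 0 a b); auto; apply ex_RInt_euler; auto.
Qed.

Lemma euler_int_le z a b : 0 < z -> a <= b -> euler_int z a <= euler_int z b.
Proof.
intros Hz Hab. rewrite (euler_int_Chasles z a b Hz).
enough (0 <= RInt (euler z) a b) by lra.
apply RInt_ge_0; auto. now apply ex_RInt_euler. intros; apply euler_ge0.
Qed.

(* [Γ(z + 1)], see [Gamma_int_Gamma1]. *)
Definition Gamma1 (z : R) : R := real (Lim_seq (fun N => euler_int z (INR N))).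

Lemma is_lim_seq_Gamma1 z : 0 < z <= 3 -> is_lim_seq (fun N => euler_int z (INR N)) (Gamma1 z).
Proof.
intros Hz. destruct (ex_finite_lim_seq_incr (fun N => euler_int z (INR N)) 434) as [l Hl].
- intros N. apply euler_int_le; [lra|]. rewrite S_INR; lra.
- intros N. apply euler_int_bounds; [auto | apply pos_INR].
- unfold Gamma1. now rewrite (is_lim_seq_unique _ _ Hl).
Qed.

Lemma euler_int_le_Gamma1 z b : 0 < z <= 3 -> 0 <= b -> euler_int z b <= Gamma1 z.
Proof.
intros Hz Hb. destruct (INR_archimed 1 b ltac:(lra)) as [N HN].
apply Rle_trans with (euler_int z (INR N)); [apply euler_int_le; lra|].
apply (is_lim_seq_incr_compare _ _ (is_lim_seq_Gamma1 z Hz)).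
intros n. apply euler_int_le; [lra|]. rewrite S_INR; lra.
Qed.

Lemma Gamma1_ge0 z : 0 < z <= 3 -> 0 <= Gamma1 z.
Proof.
intros Hz. apply Rle_trans with (euler_int z 0).
- apply euler_int_bounds; lra.
- apply euler_int_le_Gamma1; lra.
Qed.

Lemma euler_int_lim z : 0 < z <= 3 ->
  filterlim (euler_int z) (Rbar_locally p_infty) (locally (Gamma1 z)).
Proof.
intros Hz P [eps HP]. assert (H := is_lim_seq_Gamma1 z Hz). apply is_lim_seq_spec in H.
destruct (H eps) as [N HN]. exists (INR N). intros b Hb. apply HP.
assert (H1 := HN N (Nat.le_refl N)). simpl in H1.
assert (euler_int z (INR N) <= euler_int z b) by (apply euler_int_le; lra).
assert (euler_int z b <= Gamma1 z) by (apply euler_int_le_Gamma1; generalize (pos_INR N); lra).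
change (Rabs (euler_int z b - Gamma1 z) < eps). rewrite Rabs_left1 in H1 |- *; lra.
Qed.

(* Integration by parts: an antiderivative of [t ^ (w - 1) e^(-t)] on [(0, +oo)]. *)
Definition Gamma_primitive (w t : R) : R := / w * (euler w t + euler_int w t).

Lemma is_derive_Gamma_primitive w t : 0 < w -> 0 < t ->
  is_derive (Gamma_primitive w) t (Rpower t (w - 1) * exp (- t)).
Proof.
intros Hw Ht.
assert (Hd : is_derive (fun t => euler w t + euler_int w t) t
  ((w * Rpower t (w - 1) * exp (- t) + tpow w t * - exp (- t)) + euler w t)).
{ apply (is_derive_plus (K := R_AbsRing) (V := R_NormedModule)); [|now apply is_derive_euler_int].
  apply (is_derive_mult_R (tpow w) (fun t => exp (- t))); [now apply is_derive_tpow_pos|].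
  auto_derive; auto; ring. }
apply is_derive_scal with (k := / w) in Hd.
unfold euler in Hd. rewrite tpow_pos in Hd by auto.
replace (Rpower t (w - 1) * exp (- t)) with
  (/ w * (w * Rpower t (w - 1) * exp (- t) + Rpower t w * - exp (- t) + Rpower t w * exp (- t)))
  by (field; lra).
exact Hd.
Qed.

Lemma Gamma_primitive_lim_0 w : 0 < w -> filterlim (Gamma_primitive w) (at_right 0) (locally 0).
Proof.
intros Hw. replace 0 with (Gamma_primitive w 0) at 2.
- eapply filterlim_filter_le_1; [apply filter_le_within|].
  apply continuous_mult_R; [apply continuous_const|].
  apply continuous_plus_R; [apply continuous_euler | apply continuous_euler_int]; auto.
- unfold Gamma_primitive, euler, euler_int. rewrite tpow_nonpos, RInt_point by lra.
  unfold zero; simpl. ring.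
Qed.

Lemma Gamma_primitive_lim_infty w : 0 < w <= 3 ->
  filterlim (Gamma_primitive w) (Rbar_locally p_infty) (locally (Gamma1 w / w)).
Proof.
intros Hw. replace (Gamma1 w / w) with (/ w * (0 + Gamma1 w)) by (field; lra).
apply (is_lim_scal_l _ (/ w) p_infty (0 + Gamma1 w)).
apply is_lim_plus'; [now apply is_lim_euler_infty | now apply euler_int_lim].
Qed.

Lemma Gamma_int_Gamma1 w : 0 < w <= 3 -> Gamma_int w = Gamma1 w / w.
Proof.
intros Hw. unfold Gamma_int. apply is_RInt_gen_unique.
assert (Hpos : filter_prod (at_right 0) (Rbar_locally p_infty)
  (fun ab => forall x, Rmin (fst ab) (snd ab) <= x <= Rmax (fst ab) (snd ab) -> 0 < x)).
{ apply Filter_prod with (fun a => 0 < a) (fun b => 0 < b).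
  - exists (mkposreal 1 Rlt_0_1). auto.
  - exists 0. auto.
  - intros a b Ha Hb x Hx. simpl in Hx. generalize (Rmin_glb_lt a b 0 Ha Hb). lra. }
apply is_RInt_gen_ext with (Derive (Gamma_primitive w)).
{ eapply filter_imp; [|exact Hpos]. intros ab Hab x Hx.
  apply is_derive_unique, is_derive_Gamma_primitive; [lra|]. apply Hab; lra. }
replace (Gamma1 w / w) with (Gamma1 w / w - 0) by ring.
apply is_RInt_gen_Derive.
- eapply filter_imp; [|exact Hpos]. intros ab Hab x Hx.
  eexists. apply is_derive_Gamma_primitive; auto; lra.
- eapply filter_imp; [|exact Hpos]. intros ab Hab x Hx.
  apply continuous_ext_loc with (fun t => Rpower t (w - 1) * exp (- t)).
  + apply locally_interval with 0 p_infty; simpl; auto.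
    intros y Hy _. symmetry. apply is_derive_unique, is_derive_Gamma_primitive; simpl in Hy; lra.
  + apply continuous_mult_R; apply ex_derive_continuous_R.
    * eexists. apply is_derive_Reals, derivable_pt_lim_power. auto.
    * auto_derive. auto.
- apply Gamma_primitive_lim_0; lra.
- now apply Gamma_primitive_lim_infty.
Qed.

(** * Gauss's limit formula *)

Lemma rising_succ_l x m : rising x (S m) = x * rising (x + 1) m.
Proof.
induction m as [|m IH]; [simpl; ring|].
change (rising x (S (S m))) with (rising x (S m) * (x + INR (S m))).
rewrite IH. simpl rising. rewrite S_INR. ring.
Qed.

Lemma rising_pos x m : 0 < x -> 0 < rising x m.
Proof.
intros Hx. induction m as [|m IH]; simpl; [lra|].
apply Rmult_lt_0_compat; auto. generalize (pos_INR m); lra.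
Qed.

Lemma RInt_lin_comb2 (f g : R -> R) a b lo hi :
  ex_RInt f lo hi -> ex_RInt g lo hi ->
  RInt (fun x => a * f x + b * g x) lo hi = a * RInt f lo hi + b * RInt g lo hi.
Proof.
intros Hf Hg. apply is_RInt_unique.
apply (is_RInt_plus (fun x => a * f x) (fun x => b * g x));
  apply (is_RInt_scal (V := R_NormedModule)); now apply RInt_correct_R.
Qed.

Lemma RInt_lin_comb3 (f g h : R -> R) a b c lo hi :
  ex_RInt f lo hi -> ex_RInt g lo hi -> ex_RInt h lo hi ->
  RInt (fun x => a * f x + b * g x + c * h x) lo hi
  = a * RInt f lo hi + b * RInt g lo hi + c * RInt h lo hi.
Proof.
intros Hf Hg Hh. apply is_RInt_unique.
apply (is_RInt_plus (fun x => a * f x + b * g x) (fun x => c * h x));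
  [apply (is_RInt_plus (fun x => a * f x) (fun x => b * g x))|];
  apply (is_RInt_scal (V := R_NormedModule)); now apply RInt_correct_R.
Qed.

Definition beta_int (z : R) (N : nat) : R := RInt (fun u => tpow z u * (1 - u) ^ N) 0 1.

Lemma continuous_tpow_mult_poly z N x : 0 < z -> continuous (fun u => tpow z u * (1 - u) ^ N) x.
Proof.
intros Hz. apply continuous_mult_R; [now apply continuous_tpow|].
apply ex_derive_continuous_R. auto_derive. auto.
Qed.

Lemma beta_int_0 z : 0 < z -> beta_int z 0 = / (z + 1).
Proof.
intros Hz. unfold beta_int. apply is_RInt_unique.
apply (is_RInt_derive_R (fun u => / (z + 1) * tpow (z + 1) u) (fun u => tpow z u)).
- intros u _. replace (tpow z u) with (/ (z + 1) * ((z + 1) * tpow z u)) by (field; lra).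
  apply is_derive_scal, is_derive_tpow_succ; auto.
- intros. now apply continuous_tpow.
- intros. simpl. ring.
- rewrite tpow_pos, tpow_nonpos, Rpower_1_l by lra. field. lra.
Qed.

Lemma beta_int_succ z N : 0 < z ->
  (z + 1) * beta_int z (S N) = INR (S N) * beta_int (z + 1) N.
Proof.
intros Hz.
enough ((z + 1) * beta_int z (S N) + - INR (S N) * beta_int (z + 1) N = 0) by lra.
unfold beta_int.
rewrite <- RInt_lin_comb2 by (apply ex_RInt_continuous_R; intros; apply continuous_tpow_mult_poly; lra).
apply is_RInt_unique.
apply (is_RInt_derive_R (fun u => tpow (z + 1) u * (1 - u) ^ (S N))
  (fun u => (z + 1) * tpow z u * (1 - u) ^ (S N) + tpow (z + 1) u * (INR (S N) * - (1 - u) ^ N))).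
- intros u _. apply (is_derive_mult_R (tpow (z + 1)) (fun u => (1 - u) ^ (S N))).
  + now apply is_derive_tpow_succ.
  + auto_derive; auto.
    change (match N with 0%nat => 1 | S _ => INR N + 1 end) with (INR (S N)).
    replace (1 + - u) with (1 - u) by ring. ring.
- intros u _. apply continuous_plus_R.
  + apply (continuous_mult_R (fun u => (z + 1) * tpow z u)); [|apply ex_derive_continuous_R; auto_derive; auto].
    apply continuous_mult_R; [apply continuous_const | now apply continuous_tpow].
  + apply continuous_mult_R; [apply continuous_tpow; lra|]. apply ex_derive_continuous_R. auto_derive. auto.
- intros. ring.
- rewrite (tpow_nonpos _ 0) by lra. simpl. ring.
Qed.

Lemma beta_int_closed N : forall z, 0 < z -> beta_int z N = INR (fact N) / rising (z + 1) (S N).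
Proof.
induction N as [|N IH]; intros z Hz.
- rewrite beta_int_0 by auto. simpl. field. lra.
- assert (Hr := rising_pos (z + 1 + 1) (S N) ltac:(lra)).
  apply Rmult_eq_reg_l with (z + 1); [|lra].
  rewrite beta_int_succ, IH, (rising_succ_l (z + 1) (S N)), fact_simpl, mult_INR by lra.
  field. lra.
Qed.

Definition euler_approx (z : R) (n : nat) : R :=
  RInt (fun t => tpow z t * (1 - t / INR n) ^ n) 0 (INR n).

Lemma ex_RInt_euler_approx z n a b : 0 < z -> (1 <= n)%nat ->
  ex_RInt (fun t => tpow z t * (1 - t / INR n) ^ n) a b.
Proof.
intros Hz Hn. assert (0 < INR n) by (apply lt_0_INR; lia).
apply ex_RInt_continuous_R. intros. apply continuous_mult_R; [now apply continuous_tpow|].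
apply ex_derive_continuous_R. auto_derive. lra.
Qed.

Lemma euler_approx_beta z n : 0 < z -> (1 <= n)%nat ->
  euler_approx z n = Rpower (INR n) (z + 1) * beta_int z n.
Proof.
intros Hz Hn. assert (HN : 0 < INR n) by (apply lt_0_INR; lia).
unfold euler_approx. set (f := fun t => tpow z t * (1 - t / INR n) ^ n).
assert (E := RInt_comp_lin f (INR n) 0 0 1).
rewrite Rmult_0_r, Rmult_1_r, !Rplus_0_r in E. rewrite <- E by now apply ex_RInt_euler_approx.
rewrite Rpower_plus, Rpower_1 by auto. unfold beta_int.
rewrite <- (RInt_scal (V := R_CompleteNormedModule)).
- apply RInt_ext. intros u _. unfold f, scal; simpl. unfold mult; simpl.
  rewrite Rplus_0_r, tpow_scal by auto.
  replace (1 - INR n * u / INR n) with (1 - u) by (field; lra). ring.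
- apply ex_RInt_continuous_R. intros. now apply continuous_tpow_mult_poly.
Qed.

Lemma pow_sub_ge v n : 0 <= v <= 1 -> 1 - INR n * v <= (1 - v) ^ n.
Proof.
intros Hv. induction n as [|n IH]; simpl pow; [simpl; lra|].
rewrite S_INR. assert (0 <= (1 - v) ^ n) by (apply pow_le; lra).
generalize (pos_INR n). nra.
Qed.

Lemma exp_sub_pow_bounds n t : (1 <= n)%nat -> 0 <= t <= INR n ->
  0 <= exp (- t) - (1 - t / INR n) ^ n <= t ^ 2 * exp (- t) / INR n.
Proof.
intros Hn Ht. assert (HN : 0 < INR n) by (apply lt_0_INR; lia).
set (s := t / INR n).
assert (Hs : 0 <= s <= 1).
{ unfold s. split; [apply Rdiv_le_0_compat; lra|].
  apply Rmult_le_reg_r with (INR n); auto. unfold Rdiv. rewrite Rmult_assoc, Rinv_l; lra. }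
assert (Ets : t = INR n * s) by (unfold s; field; lra).
split.
- enough ((1 - s) ^ n <= exp (- t)) by lra.
  rewrite Ets, Ropp_mult_distr_r, <- exp_pow.
  apply pow_incr. generalize (exp_ineq1_le (- s)); lra.
- (* [(1 - s)^n e^t >= (1 - s)^n (1 + s)^n = (1 - s^2)^n >= 1 - n s^2]. *)
  assert (H1 : (1 + s) ^ n <= exp t).
  { rewrite Ets, <- exp_pow. apply pow_incr. generalize (exp_ineq1_le s); lra. }
  assert (H2 : 1 - INR n * (s * s) <= (1 - s * s) ^ n) by (apply pow_sub_ge; nra).
  assert (H3 : (1 + s) ^ n * (1 - s) ^ n = (1 - s * s) ^ n).
  { rewrite <- Rpow_mult_distr. f_equal. ring. }
  assert (H4 : 0 <= (1 - s) ^ n) by (apply pow_le; lra).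
  assert (H5 : 1 - t ^ 2 / INR n <= exp t * (1 - s) ^ n).
  { replace (t ^ 2 / INR n) with (INR n * (s * s)) by (rewrite Ets; field; lra).
    apply Rle_trans with ((1 + s) ^ n * (1 - s) ^ n); [lra|]. now apply Rmult_le_compat_r. }
  assert (E : exp t * exp (- t) = 1) by (rewrite <- exp_plus, <- exp_0; f_equal; ring).
  assert (Hp := exp_pos (- t)).
  replace (t ^ 2 * exp (- t) / INR n) with (exp (- t) * (t ^ 2 / INR n)) by (field; lra).
  replace (exp (- t) - (1 - s) ^ n) with (exp (- t) * (1 - exp t * (1 - s) ^ n))
    by (transitivity (exp (- t) - exp t * exp (- t) * (1 - s) ^ n); [|rewrite E]; ring).
  apply Rmult_le_compat_l; lra.
Qed.

Lemma euler_approx_le z n : 0 < z -> (1 <= n)%nat -> euler_approx z n <= euler_int z (INR n).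
Proof.
intros Hz Hn. assert (HN : 0 < INR n) by (apply lt_0_INR; lia).
apply RInt_le; [lra | now apply ex_RInt_euler_approx | now apply ex_RInt_euler |].
intros t Ht. unfold euler. apply Rmult_le_compat_l; [apply tpow_ge0|].
generalize (exp_sub_pow_bounds n t Hn ltac:(lra)). lra.
Qed.

Lemma euler_approx_ge z n : 0 < z <= 1 -> (1 <= n)%nat ->
  euler_int z (INR n) - 434 / INR n <= euler_approx z n.
Proof.
intros Hz Hn. assert (HN : 0 < INR n) by (apply lt_0_INR; lia).
assert (Hz2 := euler_int_bounds (z + 2) (INR n) ltac:(lra) ltac:(lra)).
assert (H : euler_int z (INR n) <= 1 * euler_approx z n + / INR n * euler_int (z + 2) (INR n)).
{ unfold euler_approx, euler_int at 2.
  assert (Ha := ex_RInt_euler_approx z n 0 (INR n) ltac:(lra) Hn).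
  assert (He := ex_RInt_euler (z + 2) 0 (INR n) ltac:(lra)).
  rewrite <- RInt_lin_comb2 by auto.
  apply RInt_le; [lra | apply ex_RInt_euler; lra | |].
  - apply (ex_RInt_plus (V := R_NormedModule)); apply (ex_RInt_scal (V := R_NormedModule)); auto.
  - intros t Ht. unfold euler.
    replace (z + 2) with (z + 1 + 1) by ring. rewrite !tpow_succ.
    generalize (exp_sub_pow_bounds n t Hn ltac:(lra)) (tpow_ge0 z t). intros [_ Hb] Hp.
    replace (/ INR n * (t * (t * tpow z t) * exp (- t))) with (tpow z t * (t ^ 2 * exp (- t) / INR n))
      by (field; lra).
    nra. }
enough (/ INR n * euler_int (z + 2) (INR n) <= 434 / INR n) by lra.
unfold Rdiv. rewrite Rmult_comm. apply Rmult_le_compat_r; [apply Rlt_le, Rinv_0_lt_compat|]; lra.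
Qed.

Lemma is_lim_seq_div_INR c : is_lim_seq (fun n => c / INR n) 0.
Proof.
assert (H := is_lim_seq_inv _ _ is_lim_seq_INR ltac:(discriminate)).
apply (is_lim_seq_scal_l _ c) in H. simpl in H. now rewrite Rmult_0_r in H.
Qed.

Definition gauss_seq (z : R) (n : nat) : R :=
  Rpower (INR n) (z + 1) * (INR (fact n) / rising (z + 1) (S n)).

Lemma is_lim_seq_gauss z : 0 < z <= 1 -> is_lim_seq (gauss_seq z) (Gamma1 z).
Proof.
intros Hz.
apply is_lim_seq_le_le_loc with (fun n => euler_int z (INR n) - 434 / INR n)
  (fun n => euler_int z (INR n)).
- exists 1%nat. intros n Hn. unfold gauss_seq.
  rewrite <- beta_int_closed, <- euler_approx_beta by (auto; lra).
  split; [now apply euler_approx_ge | apply euler_approx_le; auto; lra].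
- replace (Gamma1 z) with (Gamma1 z - 0) by ring.
  apply is_lim_seq_minus'; [apply is_lim_seq_Gamma1; lra | apply is_lim_seq_div_INR].
- apply is_lim_seq_Gamma1; lra.
Qed.

(** * The sine product *)

(* The partial products [Π_(k=1..N) (1 - x^2/k^2)] of [sin(πx) / (πx)]. *)
Fixpoint sine_prod (x : R) (N : nat) : R :=
  match N with O => 1 | S N' => sine_prod x N' * (1 - x ^ 2 / (INR N' + 1) ^ 2) end.

Lemma sq_div_sq_succ_bounds x k : 0 < x < 1 ->
  0 < x ^ 2 / (INR k + 1) ^ 2 <= x ^ 2 /\ x ^ 2 < 1.
Proof.
intros Hx. assert (0 <= INR k) by apply pos_INR.
assert (1 <= (INR k + 1) ^ 2) by nra.
split; [split|nra].
- apply Rdiv_lt_0_compat; nra.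
- unfold Rdiv. rewrite <- (Rmult_1_r (x ^ 2)) at 2. apply Rmult_le_compat_l; [nra|].
  rewrite <- Rinv_1. apply Rinv_le_contravar; lra.
Qed.

Lemma sine_prod_bounds x N : 0 < x < 1 -> 0 < sine_prod x N <= 1.
Proof.
intros Hx. induction N as [|N IH]; cbn [sine_prod]; [lra|].
destruct (sq_div_sq_succ_bounds x N Hx) as [Hu Hx2].
set (u := x ^ 2 / (INR N + 1) ^ 2) in *. destruct IH. split; [apply Rmult_lt_0_compat|]; nra.
Qed.

Lemma rising_mult_sine_prod x N :
  rising (x + 1) N * rising (1 - x) N = INR (fact N) ^ 2 * sine_prod x N.
Proof.
induction N as [|N IH]; [simpl; ring|].
cbn [rising sine_prod]. rewrite fact_simpl, mult_INR, S_INR.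
transitivity (rising (x + 1) N * rising (1 - x) N * ((x + 1 + INR N) * (1 - x + INR N))); [ring|].
rewrite IH. assert (0 <= INR N) by apply pos_INR. field. lra.
Qed.

Lemma gauss_seq_mult x N : 0 < x < 1 -> (1 <= N)%nat ->
  gauss_seq x N * gauss_seq (1 - x) N / (1 - x) =
  INR N ^ 3 / ((INR N + 1 + x) * (INR N + 1 - x) * (INR N + 2 - x)) / sine_prod x N.
Proof.
intros Hx HN. assert (Hn : 0 < INR N) by (apply lt_0_INR; lia). unfold gauss_seq.
assert (Epow : Rpower (INR N) (x + 1) * Rpower (INR N) (1 - x + 1) = INR N ^ 3).
{ rewrite <- Rpower_plus, <- Rpower_pow by auto. f_equal. simpl. ring. }
assert (Erise : rising (x + 1) (S N) * ((1 - x) * rising (1 - x + 1) (S N))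
  = INR (fact N) ^ 2 * sine_prod x N * ((INR N + 1 + x) * (INR N + 1 - x) * (INR N + 2 - x))).
{ rewrite <- rising_succ_l, <- rising_mult_sine_prod. cbn [rising]. rewrite S_INR. ring. }
assert (Hf : 0 < INR (fact N)) by (apply lt_0_INR, lt_O_fact).
assert (Hq := sine_prod_bounds x N Hx).
assert (R1 := rising_pos (x + 1) (S N) ltac:(lra)).
assert (R2 := rising_pos (1 - x + 1) (S N) ltac:(lra)).
transitivity (Rpower (INR N) (x + 1) * Rpower (INR N) (1 - x + 1) * INR (fact N) ^ 2
  / (rising (x + 1) (S N) * ((1 - x) * rising (1 - x + 1) (S N)))); [field; lra|].
rewrite Epow, Erise. field. repeat split; lra.
Qed.

(* [x Γ(x) Γ(1 - x)], which is [πx / sin(πx)], a fact never used. *)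
Definition reflection (x : R) : R := x * Gamma_int x * Gamma_int (1 - x).

Lemma is_lim_seq_1_plus_div_INR c : is_lim_seq (fun n => 1 + c / INR n) 1.
Proof.
assert (H := is_lim_seq_plus' _ _ _ _ (is_lim_seq_const 1) (is_lim_seq_div_INR c)).
now rewrite Rplus_0_r in H.
Qed.

Lemma is_lim_seq_inv_sine_prod x : 0 < x < 1 ->
  is_lim_seq (fun N => / sine_prod x N) (reflection x).
Proof.
intros Hx.
assert (Lg := is_lim_seq_mult' _ _ _ _ (is_lim_seq_gauss x ltac:(lra)) (is_lim_seq_gauss (1 - x) ltac:(lra))).
apply (is_lim_seq_scal_r _ (/ (1 - x))) in Lg.
assert (Lr := is_lim_seq_mult' _ _ _ _
  (is_lim_seq_mult' _ _ _ _ (is_lim_seq_1_plus_div_INR (1 + x)) (is_lim_seq_1_plus_div_INR (1 - x)))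
  (is_lim_seq_1_plus_div_INR (2 - x))).
assert (L := is_lim_seq_mult' _ _ _ _ Lg Lr). simpl in L.
unfold reflection. rewrite !Gamma_int_Gamma1 by lra.
replace (x * (Gamma1 x / x) * (Gamma1 (1 - x) / (1 - x)))
  with (Gamma1 x * Gamma1 (1 - x) * / (1 - x) * (1 * 1 * 1)) by (field; lra).
apply is_lim_seq_ext_loc with (2 := L). exists 1%nat. intros N HN.
assert (Hn : 0 < INR N) by (apply lt_0_INR; lia). assert (Hq := sine_prod_bounds x N Hx).
assert (E := gauss_seq_mult x N Hx HN). unfold Rdiv in E. rewrite E. field. repeat split; lra.
Qed.

(** * [ζ(2) = π²/6] *)

Definition harm2 (N : nat) : R := sum_n_m (fun k => / INR k ^ 2) 1 N.

Lemma harm2_0 : harm2 0 = 0.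
Proof. unfold harm2. now rewrite sum_n_m_zero by lia. Qed.

Lemma harm2_succ N : harm2 (S N) = harm2 N + / (INR N + 1) ^ 2.
Proof. unfold harm2. rewrite sum_n_Sm, S_INR by lia. reflexivity. Qed.

Lemma harm2_ge0 N : 0 <= harm2 N.
Proof.
induction N as [|N IH]; [rewrite harm2_0; lra|].
rewrite harm2_succ. assert (0 <= INR N) by apply pos_INR.
assert (0 < / (INR N + 1) ^ 2) by (apply Rinv_0_lt_compat; nra). lra.
Qed.

(* Matsuoka's proof: [harm2 N = π²/6 - 2 J_N / I_N], where [J_N / I_N = O(1/N)]. *)
Definition wallis_int (n : nat) : R := RInt (fun x => cos x ^ (2 * n)) 0 (PI / 2).
Definition wallis_sq_int (n : nat) : R := RInt (fun x => x ^ 2 * cos x ^ (2 * n)) 0 (PI / 2).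

Lemma ex_RInt_cos_pow n : ex_RInt (fun x => cos x ^ (2 * n)) 0 (PI / 2).
Proof. apply ex_RInt_continuous_R. intros. apply ex_derive_continuous_R. auto_derive. auto. Qed.

Lemma ex_RInt_sq_cos_pow n : ex_RInt (fun x => x ^ 2 * cos x ^ (2 * n)) 0 (PI / 2).
Proof. apply ex_RInt_continuous_R. intros. apply ex_derive_continuous_R. auto_derive. auto. Qed.

Lemma cos_pow_even_ge0 x n : 0 <= cos x ^ (2 * n).
Proof. rewrite Nat.mul_comm, pow_mult. apply pow2_ge_0. Qed.

Lemma is_derive_sin_cos_pow n x :
  is_derive (fun x => sin x * cos x ^ (2 * n + 1)) x
    ((2 * INR n + 2) * cos x ^ (2 * S n) + - (2 * INR n + 1) * cos x ^ (2 * n)).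
Proof.
auto_derive; auto.
replace (n + (n + 0) + 1)%nat with (S (2 * n)) by lia.
replace (2 * S n)%nat with (S (S (2 * n))) by lia.
simpl pred. rewrite S_INR, mult_INR. simpl INR. rewrite <- !tech_pow_Rmult.
assert (Hs := sin2_cos2 x). unfold Rsqr in Hs. nsatz.
Qed.

Lemma wallis_int_succ n : wallis_int (S n) = (2 * INR n + 1) / (2 * INR n + 2) * wallis_int n.
Proof.
assert (Hn := pos_INR n).
assert (H : (2 * INR n + 2) * wallis_int (S n) + - (2 * INR n + 1) * wallis_int n = 0).
{ unfold wallis_int. rewrite <- RInt_lin_comb2 by apply ex_RInt_cos_pow.
  apply is_RInt_unique. eapply (is_RInt_derive_R (fun x => sin x * cos x ^ (2 * n + 1))).
  - intros. apply is_derive_sin_cos_pow.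
  - intros. apply ex_derive_continuous_R. auto_derive. auto.
  - reflexivity.
  - rewrite cos_PI2, sin_0, pow_i by lia. ring. }
field_simplify_eq; lra.
Qed.

Lemma is_derive_sq_cos_pow n x : is_derive
  (fun x => x * cos x ^ (2 * S n) + (INR n + 1) * x ^ 2 * sin x * cos x ^ (2 * n + 1)) x
  (1 * cos x ^ (2 * S n) + 2 * (INR n + 1) ^ 2 * (x ^ 2 * cos x ^ (2 * S n))
   + - ((INR n + 1) * (2 * INR n + 1)) * (x ^ 2 * cos x ^ (2 * n))).
Proof.
auto_derive; auto.
change (match n with 0%nat => 1 | S _ => INR n + 1 end) with (INR (S n)).
replace (n + S (n + 0))%nat with (S (2 * n)) by lia.
replace (n + (n + 0))%nat with (2 * n)%nat by lia.
replace (2 * S n)%nat with (S (S (2 * n))) by lia.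
replace (2 * n + 1)%nat with (S (2 * n)) by lia.
simpl pred. rewrite ?S_INR, ?mult_INR. simpl INR. rewrite <- !tech_pow_Rmult.
assert (Hs := sin2_cos2 x). unfold Rsqr in Hs. nsatz.
Qed.

Lemma wallis_sq_int_succ n : 2 * (INR n + 1) ^ 2 * wallis_sq_int (S n)
  = (INR n + 1) * (2 * INR n + 1) * wallis_sq_int n - wallis_int (S n).
Proof.
enough (wallis_int (S n) + 2 * (INR n + 1) ^ 2 * wallis_sq_int (S n)
  - (INR n + 1) * (2 * INR n + 1) * wallis_sq_int n = 0) by lra.
transitivity (1 * wallis_int (S n) + 2 * (INR n + 1) ^ 2 * wallis_sq_int (S n)
  + - ((INR n + 1) * (2 * INR n + 1)) * wallis_sq_int n); [ring|].
unfold wallis_int, wallis_sq_int.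
rewrite <- RInt_lin_comb3;
  [|apply ex_RInt_cos_pow | apply ex_RInt_sq_cos_pow | apply ex_RInt_sq_cos_pow].
apply is_RInt_unique. eapply (is_RInt_derive_R
  (fun x => x * cos x ^ (2 * S n) + (INR n + 1) * x ^ 2 * sin x * cos x ^ (2 * n + 1))).
- intros. apply is_derive_sq_cos_pow.
- intros. apply ex_derive_continuous_R. auto_derive. auto.
- reflexivity.
- rewrite cos_PI2, sin_0, !pow_i by lia. ring.
Qed.

Lemma wallis_int_0 : wallis_int 0 = PI / 2.
Proof.
unfold wallis_int. apply is_RInt_unique.
apply (is_RInt_derive_R (fun x => x) (fun _ => 1)); intros.
- auto_derive; auto.
- apply continuous_const.
- reflexivity.
- ring.
Qed.

Lemma wallis_sq_int_0 : wallis_sq_int 0 = PI ^ 3 / 24.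
Proof.
unfold wallis_sq_int. apply is_RInt_unique.
apply (is_RInt_derive_R (fun x => x ^ 3 / 3) (fun x => x ^ 2)); intros.
- auto_derive; [auto | field].
- apply ex_derive_continuous_R. auto_derive. auto.
- simpl. ring.
- field.
Qed.

Lemma wallis_int_pos n : 0 < wallis_int n.
Proof.
induction n as [|n IH].
- rewrite wallis_int_0. generalize PI_RGT_0; lra.
- rewrite wallis_int_succ. assert (0 <= INR n) by apply pos_INR.
  apply Rmult_lt_0_compat; auto. apply Rdiv_lt_0_compat; lra.
Qed.

Lemma le_3_sin x : 0 <= x <= PI / 2 -> x <= 3 * sin x.
Proof.
intros Hx. assert (Hp := PI_4).
assert (H := sin_bound x 0). destruct H as [H _]; try lra.
unfold sin_approx, sin_term in H. simpl in H. nra.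
Qed.

(* [x² <= 9 sin² x] on [[0, π/2]], and [sin² x cos^(2n) x = cos^(2n) x - cos^(2n+2) x]. *)
Lemma wallis_sq_int_bounds n : 0 <= wallis_sq_int n <= 9 * (wallis_int n - wallis_int (S n)).
Proof.
assert (HP := PI_RGT_0). split.
- apply RInt_ge_0; [lra | apply ex_RInt_sq_cos_pow|].
  intros x _. apply Rmult_le_pos; [apply pow2_ge_0 | apply cos_pow_even_ge0].
- replace (9 * (wallis_int n - wallis_int (S n))) with
    (9 * wallis_int n + - 9 * wallis_int (S n)) by ring.
  unfold wallis_int, wallis_sq_int. rewrite <- RInt_lin_comb2 by apply ex_RInt_cos_pow.
  apply RInt_le; [lra | apply ex_RInt_sq_cos_pow | |].
  + apply ex_RInt_continuous_R. intros. apply ex_derive_continuous_R. auto_derive. auto.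
  + intros x Hx. replace (2 * S n)%nat with (S (S (2 * n))) by lia. rewrite <- !tech_pow_Rmult.
    assert (Hs := sin2_cos2 x). unfold Rsqr in Hs.
    assert (H3 := le_3_sin x ltac:(lra)). assert (Hc := cos_pow_even_ge0 x n).
    replace (x ^ 2 * cos x ^ (2 * n)) with (x * x * cos x ^ (2 * n)) by ring.
    replace (9 * cos x ^ (2 * n) + - 9 * (cos x * (cos x * cos x ^ (2 * n))))
      with (9 * (sin x * sin x) * cos x ^ (2 * n)) by (replace (sin x * sin x) with (1 - cos x * cos x) by lra; ring).
    apply Rmult_le_compat_r; nra.
Qed.

Definition basel_rem (n : nat) : R := wallis_sq_int n / wallis_int n.

Lemma basel_rem_succ n : basel_rem n - basel_rem (S n) = / (2 * (INR n + 1) ^ 2).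
Proof.
assert (Hn := pos_INR n). assert (HI := wallis_int_pos n). unfold basel_rem.
replace (wallis_sq_int n) with ((2 * (INR n + 1) ^ 2 * wallis_sq_int (S n) + wallis_int (S n))
  / ((INR n + 1) * (2 * INR n + 1))) by (rewrite wallis_sq_int_succ; field; lra).
rewrite wallis_int_succ. field. lra.
Qed.

Lemma harm2_basel_rem N : harm2 N = PI ^ 2 / 6 - 2 * basel_rem N.
Proof.
induction N as [|N IH].
- rewrite harm2_0. unfold basel_rem. rewrite wallis_int_0, wallis_sq_int_0.
  field. generalize PI_RGT_0; lra.
- rewrite harm2_succ, IH. assert (H := basel_rem_succ N). assert (0 <= INR N) by apply pos_INR.
  replace (basel_rem (S N)) with (basel_rem N - / (2 * (INR N + 1) ^ 2)) by lra.
  field. lra.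
Qed.

Lemma basel_rem_bounds N : 0 <= basel_rem N <= 9 / (2 * INR N + 2).
Proof.
unfold basel_rem. assert (H := wallis_sq_int_bounds N). assert (HI := wallis_int_pos N).
assert (0 <= INR N) by apply pos_INR. rewrite wallis_int_succ in H.
split; [apply Rdiv_le_0_compat; lra|].
apply Rmult_le_reg_r with (wallis_int N); auto.
unfold Rdiv. rewrite Rmult_assoc, Rinv_l by lra.
replace (9 * / (2 * INR N + 2) * wallis_int N)
  with (9 * (wallis_int N - (2 * INR N + 1) / (2 * INR N + 2) * wallis_int N)) by (field; lra).
lra.
Qed.

Lemma is_lim_seq_harm2 : is_lim_seq harm2 (PI ^ 2 / 6).
Proof.
apply is_lim_seq_ext with (fun N => PI ^ 2 / 6 - 2 * basel_rem N); [intros; now rewrite harm2_basel_rem|].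
assert (H : is_lim_seq basel_rem 0).
{ apply is_lim_seq_le_le_loc with (fun _ => 0) (fun N => 9 / INR N).
  - exists 1%nat. intros N HN. destruct (basel_rem_bounds N) as [H0 H1]. split; auto.
    assert (0 < INR N) by (apply lt_0_INR; lia).
    apply Rle_trans with (1 := H1). apply Rmult_le_compat_l; [lra|].
    apply Rinv_le_contravar; lra.
  - apply is_lim_seq_const.
  - apply is_lim_seq_div_INR. }
replace (PI ^ 2 / 6) with (PI ^ 2 / 6 - 2 * 0) at 1 by ring.
apply is_lim_seq_minus'; [apply is_lim_seq_const | now apply (is_lim_seq_scal_l _ 2 0)].
Qed.

Lemma zeta_2 : zeta 2 = PI ^ 2 / 6.
Proof.
unfold zeta. apply is_series_unique. unfold is_series.
assert (H := is_lim_seq_harm2). apply is_lim_seq_incr_1 in H.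
eapply filterlim_ext; [|exact H].
intros N. unfold harm2, sum_n. rewrite <- sum_n_m_S. apply sum_n_m_ext. intros k.
assert (Hk : 0 < INR k + 1) by (generalize (pos_INR k); lra).
rewrite S_INR, <- (Rpower_pow 2 _ Hk). do 2 f_equal.
Qed.

(** * Logarithmic estimates *)

Lemma neg_ln_1_sub_bounds u : 0 <= u < 1 -> u <= - ln (1 - u) <= u / (1 - u).
Proof.
intros Hu. split.
- generalize (ln_le_sub_1 (1 - u) ltac:(lra)); lra.
- rewrite <- ln_Rinv by lra.
  replace (u / (1 - u)) with (/ (1 - u) - 1) by (field; lra).
  apply ln_le_sub_1, Rinv_0_lt_compat; lra.
Qed.

Lemma neg_ln_1_sub_taylor u : 0 < u < 1 ->
  u ^ 2 / 2 <= - ln (1 - u) - u <= u ^ 2 / 2 + u ^ 3 / (1 - u).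
Proof.
intros Hu. set (h := fun t => - ln (1 - t) - t - t ^ 2 / 2).
assert (Hd : forall c, 0 <= c <= u -> derivable_pt_lim h c (c ^ 2 / (1 - c))).
{ intros c Hc. apply is_derive_Reals. unfold h. auto_derive; [lra|]. field. lra. }
destruct (MVT_cor2 h (fun c => c ^ 2 / (1 - c)) 0 u ltac:(lra) Hd) as [c [Hc Hcu]].
unfold h in Hc. replace (1 - 0) with 1 in Hc by ring. rewrite ln_1 in Hc.
assert (E : - ln (1 - u) - u = u ^ 2 / 2 + c ^ 2 / (1 - c) * u) by (rewrite Rminus_0_r in Hc; lra).
rewrite E. split.
- assert (0 <= c ^ 2 / (1 - c)) by (apply Rdiv_le_0_compat; nra). nra.
- assert (c ^ 2 / (1 - c) <= u ^ 2 / (1 - u)).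
  { apply Rmult_le_compat; [nra | apply Rlt_le, Rinv_0_lt_compat; lra | apply pow_incr; lra |].
    apply Rinv_le_contravar; lra. }
  replace (u ^ 3 / (1 - u)) with (u ^ 2 / (1 - u) * u) by (field; lra). nra.
Qed.

Lemma ln_inv_sine_prod_succ x N : 0 < x < 1 ->
  ln (/ sine_prod x (S N)) = ln (/ sine_prod x N) - ln (1 - x ^ 2 / (INR N + 1) ^ 2).
Proof.
intros Hx. destruct (sq_div_sq_succ_bounds x N Hx) as [Hu Hx2].
assert (Hq := sine_prod_bounds x N Hx). cbn [sine_prod].
rewrite Rinv_mult, ln_mult, (ln_Rinv (1 - _)) by (try apply Rinv_0_lt_compat; lra). ring.
Qed.

Lemma ln_inv_sine_prod_bounds x N : 0 < x < 1 ->
  x ^ 2 * harm2 N <= ln (/ sine_prod x N) <= x ^ 2 * harm2 N / (1 - x ^ 2).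
Proof.
intros Hx. induction N as [|N IH].
- cbn [sine_prod]. rewrite harm2_0, Rinv_1, ln_1. assert (x ^ 2 < 1) by nra.
  unfold Rdiv. rewrite !Rmult_0_r, Rmult_0_l. lra.
- rewrite ln_inv_sine_prod_succ, harm2_succ by auto.
  destruct (sq_div_sq_succ_bounds x N Hx) as [Hu Hx2].
  assert (Hl := neg_ln_1_sub_bounds (x ^ 2 / (INR N + 1) ^ 2) ltac:(lra)).
  assert (x ^ 2 / (INR N + 1) ^ 2 / (1 - x ^ 2 / (INR N + 1) ^ 2)
    <= x ^ 2 / (INR N + 1) ^ 2 / (1 - x ^ 2)).
  { apply Rmult_le_compat_l; [lra|]. apply Rinv_le_contravar; lra. }
  unfold Rdiv in *. rewrite Rmult_plus_distr_l, Rmult_plus_distr_r. lra.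
Qed.

Lemma reflection_ge1 x : 0 < x < 1 -> 1 <= reflection x.
Proof.
intros Hx. apply (is_lim_seq_le (fun _ => 1) (fun N => / sine_prod x N) 1 (reflection x)).
- intros N. destruct (sine_prod_bounds x N Hx). rewrite <- Rinv_1. apply Rinv_le_contravar; lra.
- apply is_lim_seq_const.
- now apply is_lim_seq_inv_sine_prod.
Qed.

Lemma ln_reflection_bounds x : 0 < x < 1 ->
  x ^ 2 * (PI ^ 2 / 6) <= ln (reflection x) <= x ^ 2 * (PI ^ 2 / 6) / (1 - x ^ 2).
Proof.
intros Hx. assert (Hx2 : x ^ 2 < 1) by nra.
assert (Hln : is_lim_seq (fun N => ln (/ sine_prod x N)) (ln (reflection x))).
{ apply (is_lim_seq_continuous ln); [|now apply is_lim_seq_inv_sine_prod].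
  apply derivable_continuous_pt. exists (/ reflection x).
  apply derivable_pt_lim_ln. generalize (reflection_ge1 x Hx); lra. }
assert (Hh := is_lim_seq_scal_l _ (x ^ 2) _ is_lim_seq_harm2).
split.
- apply (is_lim_seq_le _ _ _ _ (fun N => proj1 (ln_inv_sine_prod_bounds x N Hx)) Hh Hln).
- apply (is_lim_seq_scal_r _ (/ (1 - x ^ 2))) in Hh.
  apply (is_lim_seq_le _ _ _ _ (fun N => proj2 (ln_inv_sine_prod_bounds x N Hx)) Hln Hh).
Qed.

(** * [Γ] at [-n ± x] and the decomposition of [A n] *)

Lemma Gamma_int_ge0 w : 0 < w <= 3 -> 0 <= Gamma_int w.
Proof.
intros Hw. rewrite Gamma_int_Gamma1 by auto.
apply Rdiv_le_0_compat; [now apply Gamma1_ge0 | lra].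
Qed.

Lemma Gamma_int_pos x : 0 < x < 1 -> 0 < Gamma_int x /\ 0 < Gamma_int (1 - x).
Proof.
intros Hx. assert (H := reflection_ge1 x Hx). unfold reflection in H.
assert (H1 := Gamma_int_ge0 x ltac:(lra)). assert (H2 := Gamma_int_ge0 (1 - x) ltac:(lra)).
split.
- destruct (Rle_lt_or_eq_dec _ _ H1) as [|E]; auto.
  rewrite <- E, Rmult_0_r, Rmult_0_l in H. lra.
- destruct (Rle_lt_or_eq_dec _ _ H2) as [|E]; auto.
  rewrite <- E, Rmult_0_r in H. lra.
Qed.

Lemma up_INR_sub (n : nat) (r : R) : INR n - 1 <= r < INR n -> up r = Z.of_nat n.
Proof. intros H. symmetry. apply tech_up; rewrite <- INR_IZR_INZ; lra. Qed.

Lemma Gamma_neg_sub n x : 0 < x < 1 ->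
  Gamma (- INR n - x) = Gamma_int (1 - x) / rising (- INR n - x) (S n).
Proof.
intros Hx. unfold Gamma. assert (Hn := pos_INR n).
destruct (Rlt_dec 0 (- INR n - x)); [lra|].
rewrite (up_INR_sub (S n)), Nat2Z.id by (rewrite S_INR; lra).
do 2 f_equal. rewrite S_INR. ring.
Qed.

Lemma Gamma_neg_add n x : 0 < x < 1 -> Gamma (- INR n + x) = Gamma_int x / rising (x - INR n) n.
Proof.
intros Hx. unfold Gamma. destruct n as [|n].
- simpl INR. destruct (Rlt_dec 0 (- 0 + x)); [|lra]. simpl rising.
  replace (- 0 + x) with x by ring. field.
- assert (Hn := pos_INR n). rewrite S_INR.
  destruct (Rlt_dec 0 (- (INR n + 1) + x)); [lra|].
  rewrite (up_INR_sub (S n)), Nat2Z.id, S_INR by (rewrite S_INR; lra).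
  replace (- (INR n + 1) + x + (INR n + 1)) with x by ring.
  replace (- (INR n + 1) + x) with (x - (INR n + 1)) by ring. reflexivity.
Qed.

Lemma rising_neg_sub n x : rising (- INR n - x) (S n) = (-1) ^ (S n) * rising x (S n).
Proof.
induction n as [|n IH]; [simpl; ring|].
rewrite rising_succ_l. replace (- INR (S n) - x + 1) with (- INR n - x) by (rewrite S_INR; ring).
rewrite IH. change (rising x (S (S n))) with (rising x (S n) * (x + INR (S n))).
rewrite S_INR. simpl pow. ring.
Qed.

Lemma rising_sub n x : rising (x - INR n) n = (-1) ^ n * rising (1 - x) n.
Proof.
induction n as [|n IH]; [simpl; ring|].
rewrite rising_succ_l. replace (x - INR (S n) + 1) with (x - INR n) by (rewrite S_INR; ring).
rewrite IH. change (rising (1 - x) (S n)) with (rising (1 - x) n * (1 - x + INR n)).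
rewrite S_INR. simpl pow. ring.
Qed.

Lemma Rabs_div_sign a r k : 0 < r -> Rabs (a / ((-1) ^ k * r)) = Rabs a / r.
Proof.
intros Hr. unfold Rdiv.
rewrite Rabs_mult, Rabs_inv, Rabs_mult, pow_1_abs, (Rabs_right r), Rmult_1_l by lra. reflexivity.
Qed.

Lemma Rabs_Gamma_neg_sub n x : 0 < x < 1 ->
  Rabs (Gamma (- INR n - x)) = Gamma_int (1 - x) / rising x (S n).
Proof.
intros Hx. rewrite Gamma_neg_sub, rising_neg_sub by auto.
rewrite Rabs_div_sign by (apply rising_pos; lra).
rewrite Rabs_right; [reflexivity|]. apply Rle_ge, Rlt_le, (Gamma_int_pos x Hx).
Qed.

Lemma Rabs_Gamma_neg_add n x : 0 < x < 1 ->
  Rabs (Gamma (- INR n + x)) = Gamma_int x / rising (1 - x) n.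
Proof.
intros Hx. rewrite Gamma_neg_add, rising_sub by auto.
rewrite Rabs_div_sign by (apply rising_pos; lra).
rewrite Rabs_right; [reflexivity|]. apply Rle_ge, Rlt_le, (Gamma_int_pos x Hx).
Qed.

Definition A_corr (n : nat) (x : R) : R := ln (/ sine_prod x n) - x ^ 2 * harm2 n.

Lemma sq_fact_mult_Rabs_Gamma n x : 0 < x < 1 ->
  (INR (fact n) * x) * (INR (fact n) * x) * Rabs (Gamma (- INR n - x)) * Rabs (Gamma (- INR n + x))
  = reflection x * / sine_prod x n.
Proof.
intros Hx. rewrite Rabs_Gamma_neg_sub, Rabs_Gamma_neg_add, rising_succ_l by auto.
assert (Hf : 0 < INR (fact n)) by (apply lt_0_INR, lt_O_fact).
assert (Hq := sine_prod_bounds x n Hx). assert (E := rising_mult_sine_prod x n).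
assert (R1 := rising_pos (x + 1) n ltac:(lra)). assert (R2 := rising_pos (1 - x) n ltac:(lra)).
replace (sine_prod x n) with (rising (x + 1) n * rising (1 - x) n / INR (fact n) ^ 2)
  by (rewrite E; field; lra).
unfold reflection. field. repeat split; lra.
Qed.

Lemma A_eq n x : 0 < x < 1 -> A n x = ln (reflection x) + A_corr n x.
Proof.
intros Hx. destruct (Gamma_int_pos x Hx) as [G1 G2].
assert (Hf : 0 < INR (fact n)) by (apply lt_0_INR, lt_O_fact).
assert (Hq := sine_prod_bounds x n Hx).
assert (Ha : 0 < INR (fact n) * x) by nra.
assert (Hb : 0 < Rabs (Gamma (- INR n - x))).
{ rewrite Rabs_Gamma_neg_sub by auto. apply Rdiv_lt_0_compat; [lra | apply rising_pos; lra]. }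
assert (Hc : 0 < Rabs (Gamma (- INR n + x))).
{ rewrite Rabs_Gamma_neg_add by auto. apply Rdiv_lt_0_compat; [lra | apply rising_pos; lra]. }
assert (Hr : 0 < reflection x) by (generalize (reflection_ge1 x Hx); lra).
unfold A, A_corr. fold (harm2 n).
transitivity (ln ((INR (fact n) * x) * (INR (fact n) * x) * Rabs (Gamma (- INR n - x))
  * Rabs (Gamma (- INR n + x))) - x ^ 2 * harm2 n).
- rewrite !ln_mult by (repeat apply Rmult_lt_0_compat; lra). ring.
- rewrite sq_fact_mult_Rabs_Gamma, ln_mult by (auto; apply Rinv_0_lt_compat; lra). ring.
Qed.

(** * The limit *)

Lemma A_corr_succ n x : 0 < x < 1 ->
  A_corr (S n) x - A_corr n x = - ln (1 - x ^ 2 / (INR n + 1) ^ 2) - x ^ 2 / (INR n + 1) ^ 2.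
Proof.
intros Hx. unfold A_corr. rewrite ln_inv_sine_prod_succ, harm2_succ by auto.
assert (0 <= INR n) by apply pos_INR. field. lra.
Qed.

Lemma A_corr_bounds n x : 0 < x < 1 -> 0 <= A_corr n x <= x ^ 4 * harm2 n / (1 - x ^ 2).
Proof.
intros Hx. unfold A_corr. destruct (ln_inv_sine_prod_bounds x n Hx) as [H1 H2].
assert (x ^ 2 < 1) by nra.
replace (x ^ 4 * harm2 n / (1 - x ^ 2)) with (x ^ 2 * harm2 n / (1 - x ^ 2) - x ^ 2 * harm2 n)
  by (field; lra).
lra.
Qed.

(* Bounds on [(1 - A n x / A (n + 1) x) / x²] for [m = n + 1], [zt = ζ(2)] and
   [H = harm2 (n + 1)]; both tend to [1 / (2 m⁴ ζ(2))] as [x -> 0]. *)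
Definition ratio_lower (m zt H x : R) : R := (1 - x ^ 2) / (2 * m ^ 4 * (zt + x ^ 2 * H)).
Definition ratio_upper (m zt x : R) : R :=
  (1 / (2 * m ^ 4) + x ^ 2 / (m ^ 6 * (1 - x ^ 2 / m ^ 2))) / zt.

Lemma ratio_bounds_of m zt H x D B : 0 < x < 1 / 2 -> 1 <= m -> 0 < zt -> 0 <= H ->
  (x ^ 2 / m ^ 2) ^ 2 / 2 <= D
    <= (x ^ 2 / m ^ 2) ^ 2 / 2 + (x ^ 2 / m ^ 2) ^ 3 / (1 - x ^ 2 / m ^ 2) ->
  x ^ 2 * zt <= B <= x ^ 2 * (zt + x ^ 2 * H) / (1 - x ^ 2) ->
  ratio_lower m zt H x <= D / (x ^ 2 * B) <= ratio_upper m zt x.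
Proof.
intros Hx Hm Hz HH [D1 D2] [B1 B2].
assert (Hx2 : 0 < x ^ 2 < 1 / 4) by (split; nra).
assert (Hm4 : 0 < m ^ 4) by (apply pow_lt; lra).
assert (HB : 0 < x ^ 2 * B).
{ assert (0 < x ^ 2 * zt) by (apply Rmult_lt_0_compat; lra). apply Rmult_lt_0_compat; lra. }
set (u := x ^ 2 / m ^ 2) in *.
assert (Hu : 0 < u <= x ^ 2).
{ unfold u. split; [apply Rdiv_lt_0_compat; nra|].
  unfold Rdiv. rewrite <- (Rmult_1_r (x ^ 2)) at 2. apply Rmult_le_compat_l; [lra|].
  rewrite <- Rinv_1. apply Rinv_le_contravar; [lra | nra]. }
split.
- apply Rle_trans with (u ^ 2 / 2 / (x ^ 2 * B)); [|apply Rmult_le_compat_r; [apply Rlt_le, Rinv_0_lt_compat|]; lra].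
  unfold ratio_lower. replace (u ^ 2 / 2) with (x ^ 4 / (2 * m ^ 4)) by (unfold u; field; lra).
  assert (Hd : 0 < zt + x ^ 2 * H) by nra.
  apply Rmult_le_reg_r with (x ^ 2 * B); auto.
  replace (x ^ 4 / (2 * m ^ 4) / (x ^ 2 * B) * (x ^ 2 * B)) with (x ^ 4 / (2 * m ^ 4)) by (field; nra).
  apply Rle_trans with ((1 - x ^ 2) / (2 * m ^ 4 * (zt + x ^ 2 * H))
    * (x ^ 2 * (x ^ 2 * (zt + x ^ 2 * H) / (1 - x ^ 2)))).
  + apply Rmult_le_compat_l; [apply Rdiv_le_0_compat; nra | nra].
  + right. field. repeat split; nra.
- assert (Hn : 0 <= u ^ 2 / 2 + u ^ 3 / (1 - u)).
  { assert (0 < u ^ 3 / (1 - u)) by (apply Rdiv_lt_0_compat; [apply pow_lt|]; lra).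
    assert (0 < u ^ 2) by (apply pow_lt; lra). lra. }
  apply Rle_trans with ((u ^ 2 / 2 + u ^ 3 / (1 - u)) / (x ^ 2 * B));
    [apply Rmult_le_compat_r; [apply Rlt_le, Rinv_0_lt_compat|]; lra|].
  apply Rle_trans with ((u ^ 2 / 2 + u ^ 3 / (1 - u)) / (x ^ 2 * (x ^ 2 * zt))).
  + apply Rmult_le_compat_l; auto. apply Rinv_le_contravar.
    * repeat apply Rmult_lt_0_compat; lra.
    * apply Rmult_le_compat_l; lra.
  + right. unfold ratio_upper, u. field. repeat split; nra.
Qed.

Lemma ratio_bounds n x : 0 < x < 1 / 2 ->
  ratio_lower (INR n + 1) (PI ^ 2 / 6) (harm2 (S n)) x
  <= / x ^ 2 * (1 - A n x / A (S n) x) <= ratio_upper (INR n + 1) (PI ^ 2 / 6) x.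
Proof.
intros Hx. assert (Hx1 : 0 < x < 1) by lra. assert (Hn := pos_INR n).
assert (Hz : 0 < PI ^ 2 / 6) by (generalize PI_RGT_0; intros; apply Rdiv_lt_0_compat; nra).
destruct (ln_reflection_bounds x Hx1) as [L1 L2].
destruct (A_corr_bounds (S n) x Hx1) as [C1 C2].
assert (HH := harm2_ge0 (S n)). assert (Hx2 : x ^ 2 < 1) by nra.
assert (HA : 0 < ln (reflection x) + A_corr (S n) x).
{ assert (0 < x ^ 2 * (PI ^ 2 / 6)) by (apply Rmult_lt_0_compat; nra). lra. }
rewrite !A_eq by auto.
replace (/ x ^ 2 * (1 - (ln (reflection x) + A_corr n x) / (ln (reflection x) + A_corr (S n) x)))
  with ((A_corr (S n) x - A_corr n x) / (x ^ 2 * (ln (reflection x) + A_corr (S n) x)))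
  by (field; split; [lra | nra]).
apply ratio_bounds_of; auto; [lra| |split].
- rewrite A_corr_succ by auto. apply neg_ln_1_sub_taylor.
  destruct (sq_div_sq_succ_bounds x n Hx1). lra.
- nra.
- replace (x ^ 2 * (PI ^ 2 / 6 + x ^ 2 * harm2 (S n)) / (1 - x ^ 2))
    with (x ^ 2 * (PI ^ 2 / 6) / (1 - x ^ 2) + x ^ 4 * harm2 (S n) / (1 - x ^ 2)) by (field; lra).
  lra.
Qed.

Lemma ratio_lower_0 m zt H : 1 <= m -> 0 < zt -> ratio_lower m zt H 0 = 1 / (2 * m ^ 4 * zt).
Proof. intros Hm Hz. unfold ratio_lower. field. split; apply Rgt_not_eq; lra. Qed.

Lemma ratio_upper_0 m zt : 1 <= m -> 0 < zt -> ratio_upper m zt 0 = 1 / (2 * m ^ 4 * zt).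
Proof. intros Hm Hz. unfold ratio_upper. field. split; apply Rgt_not_eq; lra. Qed.

Theorem mainTheorem5 (n : nat) :
  filterlim (fun x => / x ^ 2 * (1 - A n x / A (S n) x)) (at_right 0)
    (locally (3 / ((INR n + 1) ^ 4 * PI ^ 2)))
  /\ 3 / ((INR n + 1) ^ 4 * PI ^ 2) = 1 / (2 * (INR n + 1) ^ 4 * zeta 2).
Proof.
assert (HP := PI_RGT_0). assert (Hm : 1 <= INR n + 1) by (generalize (pos_INR n); lra).
assert (Hm4 : 0 < (INR n + 1) ^ 4) by (apply pow_lt; lra).
assert (Hz : 0 < PI ^ 2 / 6) by (apply Rdiv_lt_0_compat; nra).
assert (Hlim : 3 / ((INR n + 1) ^ 4 * PI ^ 2) = 1 / (2 * (INR n + 1) ^ 4 * (PI ^ 2 / 6))).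
{ field. split; nra. }
split; [|now rewrite zeta_2].
rewrite Hlim. set (l := 1 / (2 * (INR n + 1) ^ 4 * (PI ^ 2 / 6))).
change (filterlim (fun x => / x ^ 2 * (1 - A n x / A (S n) x)) (at_right 0) (Rbar_locally l)).
apply (filterlim_le_le (ratio_lower (INR n + 1) (PI ^ 2 / 6) (harm2 (S n))) _
  (ratio_upper (INR n + 1) (PI ^ 2 / 6))).
- exists (mkposreal (1 / 2) ltac:(lra)). intros x Hx Hx0. apply ratio_bounds.
  split; auto. apply Rabs_def2 in Hx. destruct Hx as [Hx _]. change (minus x 0) with (x - 0) in Hx. simpl in Hx. lra.
- unfold l. rewrite <- (ratio_lower_0 _ _ (harm2 (S n))) by auto.
  eapply filterlim_filter_le_1; [apply filter_le_within|].
  apply ex_derive_continuous_R. unfold ratio_lower. auto_derive. nra.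
- unfold l. rewrite <- ratio_upper_0 by auto.
  eapply filterlim_filter_le_1; [apply filter_le_within|].
  apply ex_derive_continuous_R. unfold ratio_upper. auto_derive. repeat split; nra.
Qed.
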